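(* In the Setting, it cannot hold simultaneously that $r=\sqrt{K^2-\lambda_2V}$, $r+s=-\sqrt{K^2-\lambda_2V}$, $s=-\sqrt{K-\lambda_1}$, $f_1=0$, $g_1=f-c+1$, $g_2=c-1$ and $f_2=g-c$.
   Context: Setting: $\Gamma$ is a primitive strongly regular graph with parameters $(v,k,\lambda,\mu)$ (a $k$-regular graph on $v$ vertices, any two adjacent vertices having $\lambda$ and any two distinct non-adjacent vertices having $\mu$ common neighbours; primitive means $\Gamma$ and its complement are connected), with spectrum $k^1, r^f, s^g$ where $k>r>s$ and exponents are multiplicities. $C$ is a coclique in $\Gamma$ of size $c=\frac{vs}{s-k}$. A $K$-regular graph on $V$ vertices, neither complete nor edgeless, is a divisible design graph with parameters $(V,K,\lambda_1,\lambda_2;m,n)$ if its vertex set can be partitioned into $m$ canonical classes of size $n$ such that two distinct vertices in the same class have exactly $\lambda_1$ common neighbours and two vertices in different classes have exactly $\lambda_2$ common neighbours; it is proper unless $m=1$, $n=1$ or $\lambda_1=\lambda_2$. It is assumed that the subgraph $\Delta$ induced on $V(\Gamma)\setminus C$ is a proper divisible design graph with parameters $(V,K,\lambda_1,\lambda_2;m,n)$. Let $A$ be the adjacency matrix of $\Delta$, $W$ the space of vectors constant on each canonical class and $\mathbf{1}$ the all-ones vector. It is known that $A$ acts on $W^\perp$ with eigenvalues $\pm\sqrt{K-\lambda_1}$, whose multiplicities are denoted $f_1$ (for $+$) and $f_2$ (for $-$), with $f_1+f_2=m(n-1)$, and on $W\cap\mathbf{1}^\perp$ with eigenvalues $\pm\sqrt{K^2-\lambda_2V}$,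 with multiplicities $g_1$ (for $+$) and $g_2$ (for $-$), $g_1+g_2=m-1$. It is also known that the spectrum of $\Delta$ is $(k+s)^1, r^{f-c+1}, (r+s)^{c-1}, s^{g-c}$, with $c<g$. *)

From HB Require Import structures.
From mathcomp Require Import all_boot all_order all_algebra.
From mathcomp Require Import reals.
Set Implicit Arguments. Unset Strict Implicit. Unset Printing Implicit Defensive.
Import Order.TTheory GRing.Theory Num.Theory.
Local Open Scope ring_scope.

Section Graphs.
Variable T : finType.
Variable e : rel T.

Definition simple_graph := symmetric e /\ irreflexive e.

Definition compl_rel : rel T := fun x y => (x != y) && ~~ e x y.

Definition connected_rel (r : rel T) := forall x y : T, connect r x y.

Definition cnbrs (D : {set T}) (x y : T) : {set T} :=
  [set z in D | e x z && e y z].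

Definition nbrs (D : {set T}) (x : T) : {set T} := [set z in D | e x z].

Definition srg (v k lam mu : nat) :=
  [/\ simple_graph, #|T| = v,
      (forall x, #|nbrs setT x| = k),
      (forall x y, x != y -> e x y -> #|cnbrs setT x y| = lam) &
      (forall x y, x != y -> ~~ e x y -> #|cnbrs setT x y| = mu)].

Definition primitive := connected_rel e /\ connected_rel compl_rel.

Definition coclique (C : {set T}) :=
  forall x y, x \in C -> y \in C -> ~~ e x y.

(* The subgraph induced on D is a divisible design graph with parameters
   (V,K,lam1,lam2;m,n) whose canonical classes form the partition P of D. *)
Definition is_ddg (D : {set T}) (P : {set {set T}})
    (V K lam1 lam2 m n : nat) :=
  [/\ #|D| = V,
      (forall x, x \in D -> #|nbrs D x| = K),
      (exists x y, [/\ x \in D, y \in D & e x y]) &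
      (exists x y, [/\ x \in D, y \in D, x != y & ~~ e x y]) ] /\
  [/\ partition P D,
      #|P| = m,
      (forall B, B \in P -> #|B| = n),
      (forall B x y, B \in P -> x \in B -> y \in B -> x != y ->
          #|cnbrs D x y| = lam1) &
      (forall B x y, B \in P -> x \in B -> y \in D -> y \notin B ->
          #|cnbrs D x y| = lam2)].

Definition proper_ddg (lam1 lam2 m n : nat) :=
  [/\ m != 1%N, n != 1%N & lam1 != lam2].

Section Mx.
Variable R : fieldType.

Definition adjmx (D : {set T}) : 'M[R]_#|D| :=
  \matrix_(i, j) (e (enum_val i) (enum_val j))%:R.

Definition indvec (D B : {set T}) : 'rV[R]_#|D| :=
  \row_j ((enum_val j \in B)%:R).

(* W : the space of vectors constant on each canonical class *)
Definition Wsp (D : {set T}) (P : {set {set T}}) : 'M[R]_#|D| :=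
  (\sum_(B in P) <<indvec D B>>)%MS.

Definition orthmx (N : nat) (M : 'M[R]_N) : 'M[R]_N := kermx M^T.

Definition onesperp (N : nat) : 'M[R]_N := kermx (const_mx 1 : 'M[R]_(N, 1)).

Definition mult_on (N : nat) (U A : 'M[R]_N) (a : R) : nat :=
  \rank (U :&: eigenspace A a)%MS.

End Mx.
End Graphs.

(* The multiplicities f1, f2 (of +-sqrt(K-lam1) on W^perp) and g1, g2
   (of +-sqrt(K^2-lam2 V) on W \cap 1^perp) of the adjacency matrix A of the
   subgraph induced on D, W being determined by the partition P. *)
Definition ddg_theta1 (R : rcfType) (K lam1 : nat) : R :=
  Num.sqrt (K%:R - lam1%:R).
Definition ddg_theta2 (R : rcfType) (V K lam2 : nat) : R :=
  Num.sqrt (K%:R ^+ 2 - lam2%:R * V%:R).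

Definition ddg_f1 (R : rcfType) (T : finType) (e : rel T) (D : {set T})
    (P : {set {set T}}) (K lam1 : nat) : nat :=
  mult_on (orthmx (Wsp R D P)) (adjmx e R D) (ddg_theta1 R K lam1).
Definition ddg_f2 (R : rcfType) (T : finType) (e : rel T) (D : {set T})
    (P : {set {set T}}) (K lam1 : nat) : nat :=
  mult_on (orthmx (Wsp R D P)) (adjmx e R D) (- ddg_theta1 R K lam1).
Definition ddg_g1 (R : rcfType) (T : finType) (e : rel T) (D : {set T})
    (P : {set {set T}}) (V K lam2 : nat) : nat :=
  mult_on (Wsp R D P :&: onesperp R #|D|)%MS (adjmx e R D)
    (ddg_theta2 R V K lam2).
Definition ddg_g2 (R : rcfType) (T : finType) (e : rel T) (D : {set T})
    (P : {set {set T}}) (V K lam2 : nat) : nat :=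
  mult_on (Wsp R D P :&: onesperp R #|D|)%MS (adjmx e R D)
    (- ddg_theta2 R V K lam2).

From HB Require Import structures.
From mathcomp Require Import all_boot all_order all_algebra.
From mathcomp Require Import reals.
Import Order.TTheory GRing.Theory Num.Theory.
Local Open Scope ring_scope.
From mathcomp Require Import zify lra.
Set Implicit Arguments. Unset Strict Implicit. Unset Printing Implicit Defensive.

(* W is spanned by the indicator vectors of the m canonical classes,
   which are linearly independent, so dim W^perp <= m(n-1).  If f1 = 0 then
   f2 = m(n-1), so the eigenspace of -theta1 contains all of W^perp, in
   particular e_x - e_y for two vertices x, y of one class (n > 1).  Reading
   off the x-coordinate of A (e_x - e_y) = -theta1 (e_x - e_y) gives
   theta1 = [x ~ y], i.e. theta1 is 0 or 1.  The spectral equations force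
   s = -2r with r >= 0 and s < r, hence theta1 = 2r = 1 and r = 1/2; but
   r = 1/2 is the square root of the integer K^2 - lam2 V, a contradiction. *)

Section Indicators.
Variables (R : numFieldType) (T : finType) (D : {set T}).

Lemma indicator_dot (B1 B2 : {set T}) : B1 \subset D ->
  \sum_(j < #|D|) (enum_val j \in B1)%:R * (enum_val j \in B2)%:R
    = #|B1 :&: B2|%:R :> R.
Proof.
move=> sB1D; under eq_bigr => j _ do rewrite -natrM mulnb.
rewrite -natr_sum -(big_enum_val (fun x => ((x \in B1) && (x \in B2) : nat))).
rewrite -big_mkcondr /= sum1_card; congr (_%:R); apply: eq_card => x.
rewrite -topredE /= inE; apply/andP/idP => [[]//|/andP[xB1 xB2]].
by split; [exact: (subsetP sB1D) | apply/andP].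
Qed.

Lemma rank_Wsp_ge (P : {set {set T}}) :
  partition P D -> (#|P| <= \rank (Wsp R D P))%N.
Proof.
move=> /and3P[/eqP covP /trivIsetP triv set0P].
pose X : 'M[R]_(#|P|, #|D|) := \matrix_(i < #|P|) indvec R D (enum_val i).
have XW : (X <= Wsp R D P)%MS.
  apply/row_subP => i; rewrite rowK.
  by apply: (sumsmx_sup (enum_val i)); [exact: enum_valP | rewrite genmxE].
have blockD B : B \in P -> B \subset D.
  by move=> BP; rewrite -covP; exact: bigcup_sup.
have XXt : X *m X^T = diag_mx (\row_(i < #|P|) #|enum_val i|%:R).
  apply/matrixP => i j; have Pi := enum_valP i; have Pj := enum_valP j.
  rewrite !mxE; under eq_bigr => k _ do rewrite !mxE.
  rewrite indicator_dot ?blockD //.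
  have [<-|ij] := eqVneq i j; first by rewrite setIid mulr1n.
  rewrite mulr0n; apply/eqP; rewrite pnatr_eq0 cards_eq0 setI_eq0.
  by apply: triv => //; apply: contra ij => /eqP/enum_val_inj ->.
have : \rank (X *m X^T) = #|P|.
  apply: mxrank_unit; rewrite unitmxE XXt det_diag unitfE.
  rewrite prodf_seq_neq0; apply/allP => i _; rewrite mxE pnatr_eq0 cards_eq0.
  by apply: contraNneq set0P => <-; exact: enum_valP.
move=> <-; exact: leq_trans (mxrankM_maxl _ _) (mxrankS XW).
Qed.
End Indicators.

Section Eigenvectors.
Variables (R : fieldType) (N : nat).

Lemma rank_orthmx (M : 'M[R]_N) : \rank (orthmx M) = (N - \rank M)%N.
Proof. by rewrite /orthmx mxrank_ker mxrank_tr. Qed.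

Lemma sub_eigenspace_of_mult (U A : 'M[R]_N) (a : R) :
  (\rank U <= mult_on U A a)%N -> (U <= eigenspace A a)%MS.
Proof.
move=> full; have subU := capmxSl U (eigenspace A a).
have /eqmxP eqU : (U :&: eigenspace A a == U)%MS.
  by rewrite -(mxrank_leqif_eq subU) eqn_leq mxrankS.
by rewrite -eqU capmxSr.
Qed.

End Eigenvectors.

Section Adjacency.
Variables (R : fieldType) (T : finType) (e : rel T) (D : {set T}).

Definition vertex_diff (i j : 'I_#|D|) : 'rV[R]_#|D| :=
  delta_mx 0 i - delta_mx 0 j.

Lemma vertex_diff_orthW (P : {set {set T}}) (B0 : {set T}) (i j : 'I_#|D|) :
  trivIset P -> B0 \in P -> enum_val i \in B0 -> enum_val j \in B0 ->
  (vertex_diff i j <= orthmx (Wsp R D P))%MS.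
Proof.
move=> /trivIsetP triv B0P iB0 jB0.
suff /sub_kermxP uW : (Wsp R D P <= kermx (vertex_diff i j)^T)%MS.
  by apply/sub_kermxP; rewrite -[vertex_diff i j]trmxK -trmx_mul uW trmx0.
apply/sumsmx_subP => B BP; rewrite genmxE; apply/sub_kermxP.
rewrite /vertex_diff linearB /= !trmx_delta mulmxBr -!colE.
apply/matrixP => a b; rewrite !mxE.
suff -> : (enum_val i \in B) = (enum_val j \in B) by rewrite subrr.
have [->|BB0] := eqVneq B B0; first by rewrite iB0 jB0.
have dis := triv _ _ BP B0P BB0.
by rewrite (disjointFl dis iB0) (disjointFl dis jB0).
Qed.

Lemma vertex_diff_eigenvalue (i j : 'I_#|D|) (a : R) :
  irreflexive e -> i != j ->
  (vertex_diff i j <= eigenspace (adjmx e R D) a)%MS ->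
  a = - (e (enum_val j) (enum_val i))%:R.
Proof.
move=> irr ij /eigenspaceP /matrixP /(_ 0 i).
rewrite /vertex_diff mulmxBl -!rowE !mxE irr eqxx (negbTE ij) /=.
by rewrite eqxx subr0 mulr1 sub0r => <-.
Qed.

End Adjacency.

(* Key step: let D be partitioned into m > 0 blocks of size n > 1.  If -th
   is an eigenvalue of the adjacency matrix with multiplicity m(n-1) on W^perp,
   that eigenspace contains all of W^perp, in particular the
   difference of two vertices of a block; hence th is 0 or 1. *)
Lemma eigen_orthW_01 (R : numFieldType) (T : finType) (e : rel T)
    (D : {set T}) (P : {set {set T}}) (n : nat) (th : R) :
  irreflexive e -> partition P D -> (forall B, B \in P -> #|B| = n) ->
  (1 < n)%N -> (0 < #|P|)%N ->
  (#|P| * (n - 1) <= mult_on (orthmx (Wsp R D P)) (adjmx e R D) (- th))%N ->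
  th = 0 \/ th = 1.
Proof.
move=> irr partP szP n_gt1 /card_gt0P[B0 B0P] mult_full.
have cardD : #|D| = (#|P| * n)%N.
  by rewrite (card_partition partP) (eq_bigr (fun=> n) szP) sum_nat_const.
have rank_orthW : (\rank (orthmx (Wsp R D P)) <= #|P| * (n - 1))%N.
  rewrite rank_orthmx mulnBr muln1 -cardD.
  by rewrite leq_sub2l // rank_Wsp_ge.
have orthW_eigen := sub_eigenspace_of_mult (leq_trans rank_orthW mult_full).
move: (partP) => /and3P[/eqP covP trivP _].
have : (1 < #|B0|)%N by rewrite szP.
move=> /card_gt1P[x [y [xB0 yB0 xy]]].
have B0D : B0 \subset D by rewrite -covP; exact: bigcup_sup.
have xD := subsetP B0D x xB0; have yD := subsetP B0D y yB0.
pose i := enum_rank_in xD x; pose j := enum_rank_in xD y.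
have iK : enum_val i = x by rewrite enum_rankK_in.
have jK : enum_val j = y by rewrite enum_rankK_in.
have ij : i != j by apply: contra xy => /eqP ij; rewrite -iK -jK ij.
have uW := vertex_diff_orthW R (i := i) (j := j) trivP B0P.
rewrite iK jK in uW.
have := vertex_diff_eigenvalue irr ij (submx_trans (uW xB0 yB0) orthW_eigen).
by move=> /eqP; rewrite eqr_opp => /eqP ->; case: (e _ _); [right | left].
Qed.

Lemma partition_uniform_gt0 (T : finType) (D : {set T}) (P : {set {set T}})
    (n : nat) (x : T) :
  partition P D -> (forall B, B \in P -> #|B| = n) -> x \in D ->
  (0 < n)%N /\ (0 < #|P|)%N.
Proof.
move=> /and3P[/eqP covP _ _] szP; rewrite -covP => /bigcupP[B BP xB].
split; last by apply/card_gt0P; exists B.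
by rewrite -(szP B BP); apply/card_gt0P; exists x.
Qed.

Lemma sqrt_int_neq_half (R : rcfType) (a b : nat) :
  Num.sqrt (a%:R - b%:R) != 2^-1 :> R.
Proof.
apply/eqP => sqrt_half.
have z_ge0 : 0 <= a%:R - b%:R :> R.
  rewrite leNgt; apply/negP => /ltr0_sqrtr; rewrite sqrt_half; lra.
have : (4 * a)%N%:R = (4 * b + 1)%N%:R :> R.
  have := sqr_sqrtr z_ge0; rewrite sqrt_half natrD !natrM; lra.
by move=> /eqP; rewrite eqr_nat => /eqP; lia.
Qed.
Theorem mainTheorem4 (R : realType) (T : finType) (e : rel T)
    (v k lam mu : nat) (r s : R) (f g : nat) (C : {set T})
    (P : {set {set T}}) (V K lam1 lam2 m n : nat) :
  (* Gamma : primitive SRG(v,k,lam,mu) with spectrum k^1, r^f, s^g, k > r > s *)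
  srg e v k lam mu -> primitive e ->
  s < r -> r < k%:R ->
  char_poly (adjmx e R [set: T])
    = ('X - (k%:R)%:P) * ('X - r%:P) ^+ f * ('X - s%:P) ^+ g ->
  (* C : coclique of size c = v s / (s - k) *)
  coclique e C ->
  #|C|%:R = v%:R * s / (s - k%:R) ->
  (* Delta : the subgraph induced on V(Gamma) \ C is a proper DDG *)
  is_ddg e (~: C) P V K lam1 lam2 m n ->
  proper_ddg lam1 lam2 m n ->
  (* facts recorded as known in the Setting *)
  (ddg_f1 R e (~: C) P K lam1 + ddg_f2 R e (~: C) P K lam1 = m * (n - 1))%N ->
  (ddg_g1 R e (~: C) P V K lam2 + ddg_g2 R e (~: C) P V K lam2 = m - 1)%N ->
  char_poly (adjmx e R (~: C))
    = ('X - (k%:R + s)%:P) * ('X - r%:P) ^+ (f - #|C| + 1)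
      * ('X - (r + s)%:P) ^+ (#|C| - 1) * ('X - s%:P) ^+ (g - #|C|) ->
  (#|C| < g)%N ->
  (* conclusion *)
  ~ [/\ r = Num.sqrt (K%:R ^+ 2 - lam2%:R * V%:R),
        r + s = - Num.sqrt (K%:R ^+ 2 - lam2%:R * V%:R),
        s = - Num.sqrt (K%:R - lam1%:R),
        ddg_f1 R e (~: C) P K lam1 = 0%N &
        [/\ (ddg_g1 R e (~: C) P V K lam2)%:Z = f%:Z - #|C|%:Z + 1,
            (ddg_g2 R e (~: C) P V K lam2)%:Z = #|C|%:Z - 1 &
            (ddg_f2 R e (~: C) P K lam1)%:Z = g%:Z - #|C|%:Z]].
Proof.
move=> [[_ irr] _ _ _ _] _ s_lt_r _ _ _ _ [[_ _ [x [_ [xD _ _]]] _]]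
  [partP cardP szP _ _] [_ n_neq1 _] f1_f2 _ _ _ [rE rsE sE f1_0 _].
have [n_gt0 P_gt0] := partition_uniform_gt0 partP szP xD.
have n_gt1 : (1 < n)%N by case: n n_gt0 n_neq1 {szP f1_f2} => [|[|]].
(* f1 = 0, so -theta1 has full multiplicity m(n-1) on W^perp. *)
have theta1_01 : - s = 0 \/ - s = 1.
  rewrite sE opprK; apply: eigen_orthW_01 irr partP szP n_gt1 P_gt0 _.
  by rewrite cardP -f1_f2 f1_0.
(* s = -2r with r = theta2 >= 0 and s < r, so -s = 2r = 1. *)
have r_half : r = 2^-1.
  have r_ge0 : 0 <= r by rewrite rE sqrtr_ge0.
  rewrite -rE in rsE; by case: theta1_01; lra.
have := sqrt_int_neq_half R (K ^ 2) (lam2 * V).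
by rewrite natrX natrM -rE r_half eqxx.
Qed.
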